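(* Consider an instance with $n$ agents, $m$ divisible items and binary additive valuations (notation as in the context). For any two stable fractional allocations $x,x'$, their profiles are equal: $\mathbf{p}(x)=\mathbf{p}(x')$ (Chebyshev distance $0$).
   Context: Agents $[n]$, items $[m]$; each agent $i$ has a set $L_i\subseteq[m]$ of liked items. A fractional allocation is a matrix $x=(x_{o,i})$ with $x_{o,i}\ge0$ and $\sum_i x_{o,i}\le1$ for each item $o$; agent $i$'s value is $\sum_{o\in L_i}x_{o,i}$. $x$ is clean if $x_{o,i}=0$ whenever $o\notin L_i$, and max-USW if it maximizes the sum of agents' values. Throughout, allocations are clean and max-USW. Profile $\mathbf{p}(x)=(h_1,\dots,h_n)$ with $h_i=\sum_o x_{o,i}$. A transfer $u\to v$: distinct agents $u=i_1,\dots,i_k=v$ ($k\ge2$), items $o_1,\dots,o_{k-1}$ with $x_{o_l,i_l}>0$ and $o_l\in L_{i_{l+1}}$, amount $0<\Delta\le\min_l x_{o_l,i_l}$, moving $\Delta$ of $o_l$ from $i_l$ to $i_{l+1}$; narrowing if $h_u-\Delta\ge h_v+\Delta$. $x$ is stable if it admits no narrowing transfer. *)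

From HB Require Import structures.
From mathcomp Require Import all_boot all_order all_algebra.
Set Implicit Arguments. Unset Strict Implicit. Unset Printing Implicit Defensive.
Import Order.TTheory GRing.Theory Num.Theory.
Local Open Scope ring_scope.

Section Alloc.
Variables (R : realFieldType) (n m : nat).
(* Agents are 'I_n, items are 'I_m; L i is the set of items liked by agent i.
   A (fractional) allocation is x : 'I_m -> 'I_n -> R, x o i = x_{o,i}. *)
Variable L : 'I_n -> {set 'I_m}.

Definition allocation (x : 'I_m -> 'I_n -> R) : Prop :=
  (forall o i, 0 <= x o i) /\ (forall o, \sum_(i < n) x o i <= 1).

Definition agent_value (x : 'I_m -> 'I_n -> R) (i : 'I_n) : R :=
  \sum_(o in L i) x o i.

Definition usw (x : 'I_m -> 'I_n -> R) : R := \sum_(i < n) agent_value x i.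

Definition clean (x : 'I_m -> 'I_n -> R) : Prop :=
  forall o i, o \notin L i -> x o i = 0.

Definition max_usw (x : 'I_m -> 'I_n -> R) : Prop :=
  allocation x /\ forall y, allocation y -> usw y <= usw x.

Definition profile (x : 'I_m -> 'I_n -> R) (i : 'I_n) : R := \sum_(o < m) x o i.

(* A transfer u -> v: distinct agents a_0, ..., a_{k+1} (k+2 >= 2 agents),
   items o_0, ..., o_k with x_{o_l, a_l} > 0 and o_l liked by a_{l+1},
   and amount 0 < d <= min_l x_{o_l, a_l}.  u = a_0, v = a_{k+1}. *)
Definition transfer (x : 'I_m -> 'I_n -> R) (k : nat)
    (a : 'I_k.+2 -> 'I_n) (o : 'I_k.+1 -> 'I_m) (d : R) : Prop :=
  injective a /\ 0 < d /\
  forall l : 'I_k.+1,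
    0 < x (o l) (a (widen_ord (leqnSn k.+1) l)) /\
    d <= x (o l) (a (widen_ord (leqnSn k.+1) l)) /\
    o l \in L (a (lift ord0 l)).

Definition narrowing (x : 'I_m -> 'I_n -> R) (k : nat)
    (a : 'I_k.+2 -> 'I_n) (o : 'I_k.+1 -> 'I_m) (d : R) : Prop :=
  transfer x a o d /\ profile x (a ord_max) + d <= profile x (a ord0) - d.

Definition stable (x : 'I_m -> 'I_n -> R) : Prop :=
  forall k (a : 'I_k.+2 -> 'I_n) (o : 'I_k.+1 -> 'I_m) (d : R),
    ~ narrowing x a o d.
End Alloc.

From HB Require Import structures.
From mathcomp Require Import all_boot all_order all_algebra.
From mathcomp Require Import lra.
Import Order.TTheory GRing.Theory Num.Theory.
Local Open Scope ring_scope.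
Set Implicit Arguments. Unset Strict Implicit. Unset Printing Implicit Defensive.

(* Suppose h'_i < h_i for the profiles h, h' of x, x'.  Call j -> j' an
   exchange edge if some item has a larger share at j in x and a larger share
   at j' in x'.  A simple path of exchange edges from i is a transfer path for
   x and, reversed, one for x', so stability of both gives h_i <= h_v and
   h'_v <= h'_i for every v reachable from i; hence h'_v < h_v on the whole
   reachable set S.  As no exchange edge leaves S, giving the agents of S
   their x-shares of the items that S loses is still an allocation, and it
   improves on x' by the positive sum of the gaps h_v - h'_v over S,
   contradicting max-USW of x'. *)

Section StableProfiles.
Variables (R : realFieldType) (n m : nat) (L : 'I_n -> {set 'I_m}).
Implicit Types x : 'I_m -> 'I_n -> R.

Definition transfer_edge x : rel 'I_n :=
  fun i j => [exists o, (0 < x o i) && (o \in L j)].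

Lemma stable_chain_profile_le x k (a : 'I_k.+2 -> 'I_n) (o : 'I_k.+1 -> 'I_m) :
    stable L x -> injective a ->
    (forall l, 0 < x (o l) (a (widen_ord (leqnSn k.+1) l))) ->
    (forall l, o l \in L (a (lift ord0 l))) ->
  profile x (a ord0) <= profile x (a ord_max).
Proof.
move=> stable_x inj_a share_gt0 liked; rewrite leNgt -subr_gt0; apply/negP => gap_gt0.
pose share l := x (o l) (a (widen_ord (leqnSn k.+1) l)).
pose d := \big[Num.min/(profile x (a ord0) - profile x (a ord_max)) / 2]_l share l.
have d_gt0 : 0 < d by apply: lt_bigmin => [|l _]; [apply: divr_gt0|apply: share_gt0].
have d_le_share l : d <= share l by apply: bigmin_le.
have d_le_half : d <= (profile x (a ord0) - profile x (a ord_max)) / 2.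
  exact: bigmin_le_id.
apply: (stable_x k a o d); split; last by move: d_le_half; lra.
by do 2 split=> //; move=> l; split; [exact: share_gt0 | split; [exact: d_le_share|]].
Qed.

Lemma transfer_chain_of_path x u p :
    path (transfer_edge x) u p -> uniq (u :: p) -> p != [::] ->
  exists k (a : 'I_k.+2 -> 'I_n) (o : 'I_k.+1 -> 'I_m),
    [/\ injective a, a ord0 = u, a ord_max = last u p,
        forall l, 0 < x (o l) (a (widen_ord (leqnSn k.+1) l))
      & forall l, o l \in L (a (lift ord0 l))].
Proof.
case: p => [|w p] // /(pathP u) edges uniq_up _.
pose a : 'I_(size p).+2 -> 'I_n := fun l => nth u (u :: w :: p) l.
have /fin_all_exists2 [o share_gt0 liked] : forall l : 'I_(size p).+1,
    exists2 o, 0 < x o (a (widen_ord (leqnSn _) l)) & o \in L (a (lift ord0 l)).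
  move=> l; have /existsP [o /andP [? ?]] := edges l (ltn_ord l).
  by exists o; rewrite /a ?lift0.
exists (size p), a, o; split=> //; last by rewrite /a (last_nth u).
by move=> l1 l2 /eqP; rewrite /a nth_uniq // => /eqP /val_inj.
Qed.

Lemma stable_path_profile_le x u p :
    stable L x -> path (transfer_edge x) u p -> uniq (u :: p) ->
  profile x u <= profile x (last u p).
Proof.
move=> stable_x path_up uniq_up; have [-> //|p_neq0] := eqVneq p [::].
have [k [a [o [inj_a <- <- share_gt0 liked]]]] := transfer_chain_of_path path_up uniq_up p_neq0.
exact: stable_chain_profile_le share_gt0 liked.
Qed.

Definition exchange_edge x x' : rel 'I_n :=
  fun j j' => [exists o, (x' o j < x o j) && (x o j' < x' o j')].

Lemma exchange_edgeC x x' j j' : exchange_edge x x' j j' = exchange_edge x' x j' j.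
Proof. by apply: eq_existsb => o; rewrite andbC. Qed.

Lemma usw_clean x : clean L x -> usw L x = \sum_i profile x i.
Proof.
move=> clean_x; apply: eq_bigr => i _; rewrite /agent_value /profile big_mkcond.
by apply: eq_bigr => o _; case: ifP => // /negbT /clean_x ->.
Qed.

Lemma exchange_transfer_edge x x' :
    (forall o i, 0 <= x o i) -> (forall o i, 0 <= x' o i) -> clean L x' ->
  subrel (exchange_edge x x') (transfer_edge x).
Proof.
move=> x_ge0 x'_ge0 clean_x' j j' /existsP [o /andP [lt_j lt_j']].
apply/existsP; exists o; rewrite (le_lt_trans (x'_ge0 o j) lt_j).
by apply: contraLR lt_j' => /clean_x' ->; rewrite -leNgt.
Qed.

Section TwoAllocations.
Variables x x' : 'I_m -> 'I_n -> R.
Hypotheses (alloc_x : allocation x) (alloc_x' : allocation x').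
Hypotheses (clean_x : clean L x) (clean_x' : clean L x').

Lemma exchange_connect_profile_le i v :
    stable L x -> stable L x' -> connect (exchange_edge x x') i v ->
  profile x i <= profile x v /\ profile x' v <= profile x' i.
Proof.
have [[x_ge0 _] [x'_ge0 _]] := (alloc_x, alloc_x').
move=> stable_x stable_x' /connectP [p path_ip ->].
case/shortenP: path_ip => q path_iq uniq_iq _; split.
  have path_x := sub_path (exchange_transfer_edge x_ge0 x'_ge0 clean_x') path_iq.
  exact: stable_path_profile_le stable_x path_x uniq_iq.
have path_rev : path (transfer_edge x') (last i q) (rev (belast i q)).
  rewrite rev_path; apply: sub_path path_iq => j j' e_jj'.
  by apply: (exchange_transfer_edge x'_ge0 x_ge0 clean_x); rewrite -exchange_edgeC.
have uniq_rev : uniq (last i q :: rev (belast i q)).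
  by rewrite -rev_rcons -lastI rev_uniq.
have := stable_path_profile_le stable_x' path_rev uniq_rev.
by case: q {path_iq uniq_iq path_rev uniq_rev} => //= w q; rewrite rev_cons last_rcons.
Qed.

Section Exchange.
Variable S : {set 'I_n}.
Hypothesis S_closed : forall j j', j \in S -> exchange_edge x x' j j' -> j' \in S.

Definition leaves_S o := [exists j in S, x' o j < x o j].

Definition exchange_on o j := if leaves_S o && (j \in S) then x o j else x' o j.

Lemma clean_exchange_on : clean L exchange_on.
Proof.
by move=> o j Lj; rewrite /exchange_on; case: ifP => _; [apply: clean_x|apply: clean_x'].
Qed.

Lemma leaves_S_notin_le o j : leaves_S o -> j \notin S -> x' o j <= x o j.
Proof.
case/exists_inP => j0 Sj0 lt_j0; apply: contraR; rewrite -ltNge => lt_j.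
by apply: (S_closed Sj0); apply/existsP; exists o; rewrite lt_j0.
Qed.

Lemma allocation_exchange_on : allocation exchange_on.
Proof.
have [[x_ge0 x_le1] [x'_ge0 x'_le1]] := (alloc_x, alloc_x').
split=> [o j|o]; first by rewrite /exchange_on; case: ifP.
rewrite /exchange_on; case: (boolP (leaves_S o)) => /= [out_o|_]; last exact: x'_le1.
apply: le_trans (x_le1 o); apply: ler_sum => j _.
by case: ifPn => // /(leaves_S_notin_le out_o).
Qed.

Lemma exchange_on_gain :
  \sum_(j in S) (profile x j - profile x' j) <= usw L exchange_on - usw L x'.
Proof.
rewrite (usw_clean clean_exchange_on) (usw_clean clean_x') -sumrB big_mkcond.
apply: ler_sum => j _.
rewrite /profile -!sumrB; case: ifPn => Sj; last first.
  by apply: sumr_ge0 => o _; rewrite /exchange_on (negbTE Sj) andbF subrr.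
apply: ler_sum => o _; rewrite /exchange_on Sj andbT lerD2r.
case: (boolP (leaves_S o)) => // stay_o; rewrite leNgt; apply: contra stay_o => lt_j.
by apply/exists_inP; exists j.
Qed.

End Exchange.

Lemma stable_profile_le i :
  stable L x -> stable L x' -> max_usw L x' -> profile x i <= profile x' i.
Proof.
move=> stable_x stable_x' [_ max_x']; rewrite leNgt; apply/negP => lt_i.
pose S := [set v | connect (exchange_edge x x') i v].
have S_closed j j' : j \in S -> exchange_edge x x' j j' -> j' \in S.
  by rewrite !inE => ij /connect1; apply: connect_trans.
have gain_gt0 v : v \in S -> 0 < profile x v - profile x' v.
  rewrite inE => /(exchange_connect_profile_le stable_x stable_x') [le_x le_x'].
  by move: lt_i; rewrite subr_gt0; lra.
have S_i : i \in S by rewrite inE connect0.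
have sum_gt0 : 0 < \sum_(j in S) (profile x j - profile x' j).
  rewrite (bigD1 i) //=; apply: ltr_pwDl (gain_gt0 i S_i) _.
  by apply: sumr_ge0 => j /andP [S_j _]; apply/ltW/gain_gt0.
have := exchange_on_gain S; have := max_x' _ (allocation_exchange_on S_closed).
lra.
Qed.

End TwoAllocations.

End StableProfiles.

Theorem theorem4 (R : realFieldType) (n m : nat) (L : 'I_n -> {set 'I_m})
    (x x' : 'I_m -> 'I_n -> R) :
  clean L x -> max_usw L x -> stable L x ->
  clean L x' -> max_usw L x' -> stable L x' ->
  forall i : 'I_n, profile x i = profile x' i.
Proof.
move=> clean_x max_x stable_x clean_x' max_x' stable_x' i.
have [alloc_x alloc_x'] := (max_x.1, max_x'.1).
apply/le_anti/andP; split.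
- exact: (stable_profile_le alloc_x alloc_x' clean_x clean_x').
- exact: (stable_profile_le alloc_x' alloc_x clean_x' clean_x).
Qed.
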